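(* Let $n\geq1$. The assignment $\rho_i\mapsto\sigma_1\sigma_2\cdots\sigma_i$ ($1\leq i\leq n$) extends to a group isomorphism from the group with presentation $$\langle\rho_1,\dots,\rho_n\mid\rho_1\rho_j\rho_i=\rho_{i+1}\rho_j\ \text{for } 1\leq i<j\leq n\rangle$$ onto the braid group $\mathcal{B}_{n+1}$; its inverse sends $\sigma_i\mapsto\rho_{i-1}^{-1}\rho_i$ (with $\rho_0=1$). Under this isomorphism, the image of the monoid $\mathcal{H}_n^+$ with the same presentation is the submonoid $\Sigma_n$ of $\mathcal{B}_{n+1}$.
   Context: $\mathcal{B}_{n+1}$ is the braid group with generators $\sigma_1,\dots,\sigma_n$ and relations $\sigma_i\sigma_{i+1}\sigma_i=\sigma_{i+1}\sigma_i\sigma_{i+1}$ ($1\leq i<n$), $\sigma_i\sigma_j=\sigma_j\sigma_i$ ($|i-j|>1$). $\mathcal{H}_n^+$ is the monoid with generators $\rho_1,\dots,\rho_n$ and relations $\rho_1\rho_j\rho_i=\rho_{i+1}\rho_j$ for $1\leq i<j\leq n$. $\Sigma_n$ is the submonoid of $\mathcal{B}_{n+1}$ generated by $\sigma_1,\ \sigma_1\sigma_2,\ \dots,\ \sigma_1\sigma_2\cdots\sigma_n$. *)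

From mathcomp Require Import all_boot.
Set Implicit Arguments. Unset Strict Implicit. Unset Printing Implicit Defensive.

(* A letter (i, b) is the generator x_i if b = false and x_i^{-1} if b = true. *)
Definition letter := (nat * bool)%type.
Definition word := seq letter.

Definition inv_letter (x : letter) : letter := (x.1, ~~ x.2).
Definition inv_word (w : word) : word := rev (map inv_letter w).

Definition word_on (n : nat) (w : word) : bool :=
  all (fun x : letter => (0 < x.1 <= n)%N) w.

Definition pos_word_on (n : nat) (w : word) : bool :=
  word_on n w && all (fun x : letter => ~~ x.2) w.

(* Equality in the group presented by the relations R (pairs l = r):
   the congruence on words generated by free cancellation and the relations. *)
Inductive pres_eq (R : seq (word * word)) : word -> word -> Prop :=
| geq_refl w : pres_eq R w w
| geq_sym u v : pres_eq R u v -> pres_eq R v u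
| geq_trans u v w : pres_eq R u v -> pres_eq R v w -> pres_eq R u w
| geq_free u v x : pres_eq R (u ++ x :: inv_letter x :: v) (u ++ v)
| geq_rel u v l r : (l, r) \in R -> pres_eq R (u ++ l ++ v) (u ++ r ++ v).


Definition gen (i : nat) : letter := (i, false).

(* Braid group B_{n+1}: generators sigma_1..sigma_n *)
Definition braid_rels (n : nat) : seq (word * word) :=
  [seq ([:: gen i; gen i.+1; gen i], [:: gen i.+1; gen i; gen i.+1]) | i <- iota 1 n.-1]
  ++ [seq ([:: gen ij.1; gen ij.2], [:: gen ij.2; gen ij.1])
     | ij <- [seq (i, j) | i <- iota 1 n, j <- iota 1 n]
     & (ij.1.+1 < ij.2)%N || (ij.2.+1 < ij.1)%N].

Definition H_rels (n : nat) : seq (word * word) :=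
  [seq ([:: gen 1; gen ij.2; gen ij.1], [:: gen ij.1.+1; gen ij.2])
  | ij <- [seq (i, j) | j <- iota 1 n, i <- iota 1 j.-1]].

Definition subst (f : nat -> word) (w : word) : word :=
  flatten [seq (if x.2 then inv_word (f x.1) else f x.1) | x <- w].

Definition phi (i : nat) : word := [seq gen k | k <- iota 1 i].

(* sigma_i |-> rho_{i-1}^{-1} rho_i, with rho_0 = 1 *)
Definition psi (i : nat) : word :=
  if (i <= 1)%N then [:: gen i] else [:: (i.-1, true); gen i].

Definition in_Sigma (n : nat) (w : word) : Prop :=
  exists s : seq nat, all (fun i => 0 < i <= n)%N s /\
                      pres_eq (braid_rels n) w (flatten [seq phi i | i <- s]).

Definition in_image_H (n : nat) (w : word) : Prop :=
  exists p : word, pos_word_on n p /\ pres_eq (braid_rels n) w (subst phi p).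

From Stdlib Require Import Setoid Morphisms.
From mathcomp Require Import all_boot.
From mathcomp Require Import zify.
Set Implicit Arguments. Unset Strict Implicit. Unset Printing Implicit Defensive.

#[local] Hint Resolve geq_refl : core.

Lemma inv_letterK : involutive inv_letter.
Proof. by case=> a b; rewrite /inv_letter /= negbK. Qed.

Lemma inv_wordK : involutive inv_word.
Proof. by move=> w; rewrite /inv_word map_rev revK (mapK inv_letterK). Qed.

Lemma inv_word_cons a w : inv_word (a :: w) = inv_word w ++ [:: inv_letter a].
Proof. by rewrite /inv_word /= rev_cons cats1. Qed.

Lemma inv_word_cat u v : inv_word (u ++ v) = inv_word v ++ inv_word u.
Proof. by rewrite /inv_word map_cat rev_cat. Qed.

Lemma iota_succ m i : iota m i.+1 = iota m i ++ [:: m + i].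
Proof. by rewrite -addn1 iotaD. Qed.

Section Presentation.
Variable R : seq (word * word).
Local Notation "u ≡ v" := (pres_eq R u v) (at level 70).

Lemma pres_eq_catl a u v : u ≡ v -> a ++ u ≡ a ++ v.
Proof.
elim=> {u v} [w | u v _ | u v w _ Huv _ Hvw | u v x | u v l r Hlr].
- exact: geq_refl.
- exact: geq_sym.
- exact: geq_trans Hvw.
- by rewrite !catA; apply: geq_free.
- by rewrite !catA -(catA _ l) -(catA _ r); apply: geq_rel.
Qed.

Lemma pres_eq_catr b u v : u ≡ v -> u ++ b ≡ v ++ b.
Proof.
elim=> {u v} [w | u v _ | u v w _ Huv _ Hvw | u v x | u v l r Hlr].
- exact: geq_refl.
- exact: geq_sym.
- exact: geq_trans Hvw.
- by rewrite -!catA; apply: geq_free.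
- by rewrite -!catA; apply: geq_rel.
Qed.

Global Instance pres_eq_Equivalence : Equivalence (pres_eq R).
Proof. split; [exact: geq_refl | exact: geq_sym | exact: geq_trans]. Qed.

Global Instance cat_pres_eq_Proper :
  Proper (pres_eq R ==> pres_eq R ==> pres_eq R) cat.
Proof.
move=> a b Hab c d Hcd.
by apply: (@geq_trans R _ (b ++ c)); [exact: pres_eq_catr | exact: pres_eq_catl].
Qed.

Global Instance cons_pres_eq_Proper x : Proper (pres_eq R ==> pres_eq R) (cons x).
Proof. by move=> a b; apply: (pres_eq_catl [:: x]). Qed.

Lemma cancel_letter x t : x :: inv_letter x :: t ≡ t.
Proof. exact: (geq_free R [::] t x). Qed.

Lemma cancel_inv_letter x t : inv_letter x :: x :: t ≡ t.
Proof. by have := cancel_letter (inv_letter x) t; rewrite inv_letterK. Qed.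

Lemma cancel_gen k t : gen k :: (k, true) :: t ≡ t.
Proof. exact: (cancel_letter (gen k)). Qed.

Lemma cancel_gen_inv k t : (k, true) :: gen k :: t ≡ t.
Proof. exact: (cancel_letter (k, true)). Qed.

Lemma cancel_word w t : w ++ inv_word w ++ t ≡ t.
Proof.
elim: w t => [|a w IHw] t //=.
by rewrite inv_word_cons -catA /= IHw cancel_letter.
Qed.

Lemma cancel_inv_word w t : inv_word w ++ w ++ t ≡ t.
Proof. by have := cancel_word (inv_word w) t; rewrite inv_wordK. Qed.

Lemma inv_word_represents F a : (forall t, F ++ t ≡ a :: t) ->
  forall t, inv_word F ++ t ≡ inv_letter a :: t.
Proof.
move=> HF t.
rewrite -[inv_word F ++ t](cancel_inv_letter a) -HF cancel_word.
reflexivity.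
Qed.

Lemma conj_inv_letter a P Q : (forall t, a :: P ++ t ≡ Q ++ a :: t) ->
  forall t, inv_letter a :: Q ++ t ≡ P ++ inv_letter a :: t.
Proof.
move=> Hconj t.
by rewrite -[P ++ _](cancel_inv_letter a) Hconj cancel_letter.
Qed.

Lemma psi_telescope m t :
  flatten [seq psi k | k <- iota 1 m.+1] ++ t ≡ gen m.+1 :: t.
Proof.
elim: m t => [|m IHm] t //.
by rewrite iota_succ map_cat flatten_cat -catA IHm /= cancel_gen.
Qed.

End Presentation.

Lemma subst_cat f u v : subst f (u ++ v) = subst f u ++ subst f v.
Proof. by rewrite /subst map_cat flatten_cat. Qed.

Lemma subst_cons f x u :
  subst f (x :: u) = (if x.2 then inv_word (f x.1) else f x.1) ++ subst f u.
Proof. by []. Qed.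

Lemma subst_gen f s : subst f (map gen s) = flatten (map f s).
Proof. by elim: s => //= k s IHs; rewrite subst_cons IHs. Qed.

Lemma subst_inv f w : subst f (inv_word w) = inv_word (subst f w).
Proof.
elim: w => [|[k b] w IHw] //.
rewrite inv_word_cons subst_cat IHw subst_cons inv_word_cat; congr (_ ++ _).
by case: b; rewrite /subst /= cats0 ?inv_wordK.
Qed.

Lemma subst_subst g f u :
  subst g (subst f u) = subst (fun k => subst g (f k)) u.
Proof.
elim: u => [|[k b] u IHu] //.
by rewrite subst_cons subst_cat IHu subst_cons; case: b => //=; rewrite subst_inv.
Qed.

Lemma subst_pres R1 R2 f :
  (forall l r, (l, r) \in R1 -> pres_eq R2 (subst f l) (subst f r)) ->
  forall u v, pres_eq R1 u v -> pres_eq R2 (subst f u) (subst f v).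
Proof.
move=> HR u v; elim=> {u v} [w | u v _ | u v w _ Huv _ Hvw | u v [k b] | u v l r Hlr].
- by [].
- by symmetry.
- by rewrite Huv.
- rewrite !subst_cat !subst_cons /inv_letter.
  by case: b => /=; [rewrite cancel_inv_word | rewrite cancel_word].
- by rewrite !subst_cat (HR _ _ Hlr).
Qed.

Lemma subst_id R n f :
  (forall k, (0 < k <= n)%N -> forall t, pres_eq R (f k ++ t) (gen k :: t)) ->
  forall u, word_on n u -> pres_eq R (subst f u) u.
Proof.
move=> Hf u Hu; rewrite -[u in pres_eq _ _ u]cats0 -[subst f u]cats0.
elim: u Hu [::] => [|[k b] u IHu] //= /andP[/= Hk Hu] t.
rewrite subst_cons -catA (IHu Hu) /=.
by case: b; [exact: (inv_word_represents (Hf k Hk)) | exact: Hf].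
Qed.

Lemma phi_succ m : phi m.+1 = phi m ++ [:: gen m.+1].
Proof. by rewrite /phi iota_succ map_cat add1n. Qed.

Lemma map_succ_iota m i : map succn (iota m i) = iota m.+1 i.
Proof. by elim: i m => //= i IHi m; rewrite IHi. Qed.

Section Braid.
Variable n : nat.
Local Notation "u ≡ v" := (pres_eq (braid_rels n) u v) (at level 70).

Lemma braid_rel k t : (0 < k)%N -> (k < n)%N ->
  gen k :: gen k.+1 :: gen k :: t ≡ gen k.+1 :: gen k :: gen k.+1 :: t.
Proof.
move=> Hk Hkn.
suff Hrel : ([:: gen k; gen k.+1; gen k], [:: gen k.+1; gen k; gen k.+1])
              \in braid_rels n by exact: (geq_rel [::] t Hrel).
by rewrite mem_cat map_f // mem_iota; lia.
Qed.

Lemma far_comm i j t : (0 < i <= n)%N -> (0 < j <= n)%N ->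
  (i.+1 < j)%N || (j.+1 < i)%N -> gen i :: gen j :: t ≡ gen j :: gen i :: t.
Proof.
move=> Hi Hj Hij.
suff Hrel : ([:: gen i; gen j], [:: gen j; gen i]) \in braid_rels n
  by exact: (geq_rel [::] t Hrel).
rewrite mem_cat; apply/orP; right; apply/mapP; exists (i, j) => //.
by rewrite mem_filter Hij /=; apply: allpairs_f; rewrite mem_iota; lia.
Qed.

Lemma far_comm_word k ks t : (0 < k <= n)%N ->
  all (fun m => (0 < m <= n)%N && ((m.+1 < k)%N || (k.+1 < m)%N)) ks ->
  gen k :: map gen ks ++ t ≡ map gen ks ++ gen k :: t.
Proof.
move=> Hk; elim: ks => [|m ks IHks] //= /andP[/andP[Hm Hmk] Hks].
by rewrite far_comm 1?orbC // IHks.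
Qed.

Lemma phi_shift k j t : (0 < k)%N -> (k < j)%N -> (j <= n)%N ->
  phi j ++ gen k :: t ≡ gen k.+1 :: phi j ++ t.
Proof.
move=> Hk Hkj Hj.
have -> : phi j = map gen (iota 1 k.-1 ++ [:: k, k.+1 & iota k.+2 (j - k.+1)]).
  rewrite /phi -[j in iota 1 j](_ : k.-1 + (j - k.+1).+2 = j); last lia.
  by rewrite iotaD (_ : 1 + k.-1 = k) //; lia.
rewrite map_cat -!catA /=.
rewrite -(@far_comm_word k (iota k.+2 (j - k.+1)));
  [| lia | by apply/allP => x; rewrite mem_iota; lia].
rewrite braid_rel; [| lia | lia].
rewrite -(@far_comm_word k.+1 (iota 1 k.-1));
  [| lia | by apply/allP => x; rewrite mem_iota; lia].
reflexivity.
Qed.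

Lemma phi_shift_word j ks t : (j <= n)%N -> all (fun k => (0 < k < j)%N) ks ->
  phi j ++ map gen ks ++ t ≡ map gen (map succn ks) ++ phi j ++ t.
Proof.
move=> Hj; elim: ks => [|k ks IHks] //= /andP[/andP[Hk Hkj] Hks].
by rewrite phi_shift // IHks.
Qed.

Lemma phi_H_rel i j : (0 < i)%N -> (i < j)%N -> (j <= n)%N ->
  subst phi [:: gen 1; gen j; gen i] ≡ subst phi [:: gen i.+1; gen j].
Proof.
move=> Hi Hij Hj; rewrite /subst /= !cats0.
have := @phi_shift_word j (iota 1 i) [::] Hj.
rewrite !cats0 map_succ_iota => ->; first by [].
by apply/allP => x; rewrite mem_iota; lia.
Qed.

Lemma phi_H_rels l r : (l, r) \in H_rels n -> subst phi l ≡ subst phi r.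
Proof.
case/mapP=> [[i j]] /allpairsPdep[j' [i' [Hj Hi [-> ->]]]] [-> ->].
by move: Hj Hi; rewrite !mem_iota => Hj Hi; apply: phi_H_rel; lia.
Qed.

(* phi(psi(sigma_k)) = phi_{k-1}^{-1} phi_k = sigma_k. *)
Lemma phi_psi_gen k t : (0 < k)%N -> subst phi (psi k) ++ t ≡ gen k :: t.
Proof.
case: k => [|[|m]] // _.
have -> : subst phi (psi m.+2) = inv_word (phi m.+1) ++ phi m.+2 ++ [::] by [].
by rewrite cats0 (phi_succ m.+1) -!catA cancel_inv_word.
Qed.

End Braid.

Section Hgroup.
Variable n : nat.
Local Notation "u ≡ v" := (pres_eq (H_rels n) u v) (at level 70).

Lemma H_rel i j t : (0 < i)%N -> (i < j)%N -> (j <= n)%N ->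
  gen 1 :: gen j :: gen i :: t ≡ gen i.+1 :: gen j :: t.
Proof.
move=> Hi Hij Hj.
suff Hrel : ([:: gen 1; gen j; gen i], [:: gen i.+1; gen j]) \in H_rels n
  by exact: (geq_rel [::] t Hrel).
apply/mapP; exists (i, j) => //.
by apply/allpairsPdep; exists j, i; rewrite !mem_iota; split => //; lia.
Qed.

(* rho_j psi_k = psi_{k+1} rho_j for 0 < k < j <= n: this is the relation
   rho_1 rho_j rho_k = rho_{k+1} rho_j, solved for rho_j. *)
Lemma rho_psi_shift k j t : (0 < k)%N -> (k < j)%N -> (j <= n)%N ->
  gen j :: psi k ++ t ≡ psi k.+1 ++ gen j :: t.
Proof.
case: k => [|[|m]] // _ Hkj Hj /=.
  by rewrite -[gen j :: _](cancel_gen_inv _ 1) H_rel.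
rewrite -[gen j :: _](cancel_gen_inv _ m.+2) -(@H_rel m.+1 j) //; last lia.
by rewrite cancel_gen H_rel.
Qed.

Lemma psi_comm k j t : (0 < k)%N -> (k.+1 < j)%N -> (j <= n)%N ->
  psi j ++ psi k ++ t ≡ psi k ++ psi j ++ t.
Proof.
case: j => [|[|[|l]]] Hk Hkj Hj //; try lia.
rewrite /= (@rho_psi_shift k l.+3) //; last lia.
apply: (@conj_inv_letter _ (gen l.+2)) => u.
by apply: rho_psi_shift; lia.
Qed.

Lemma psi_comm_word j ks t : (j <= n)%N ->
  all (fun k => (0 < k)%N && (k.+1 < j)%N) ks ->
  flatten (map psi ks) ++ psi j ++ t ≡ psi j ++ flatten (map psi ks) ++ t.
Proof.
move=> Hj; elim: ks => [|k ks IHks] //= /andP[/andP[Hk Hkj] Hks].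
by rewrite -!catA IHks // -psi_comm.
Qed.

(* rho_m commutes with psi_j when m + 1 < j <= n, since rho_m is the product
   psi_1 ... psi_m. *)
Lemma rho_psi_comm m j t : (0 < m)%N -> (m.+1 < j)%N -> (j <= n)%N ->
  gen m :: psi j ++ t ≡ psi j ++ gen m :: t.
Proof.
case: m => [|m] // _ Hmj Hj.
rewrite -!psi_telescope psi_comm_word //.
by apply/allP => x; rewrite mem_iota; lia.
Qed.

Lemma psi_braid i t : (0 < i)%N -> (i < n)%N ->
  psi i ++ psi i.+1 ++ psi i ++ t ≡ psi i.+1 ++ psi i ++ psi i.+1 ++ t.
Proof.
case: i => [|[|m]] // _ Hin /=.
  by rewrite !cancel_gen (@rho_psi_shift 1 2) //; lia.
rewrite !cancel_gen (@rho_psi_shift m.+2 m.+3) //=.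
apply: (@conj_inv_letter _ (gen m.+1) (psi m.+3) (psi m.+3)) => u.
by apply: rho_psi_comm.
Qed.

Lemma psi_braid_rels l r : (l, r) \in braid_rels n -> subst psi l ≡ subst psi r.
Proof.
rewrite mem_cat => /orP[].
  case/mapP=> i; rewrite mem_iota => Hi [-> ->].
  have := @psi_braid i [::]; rewrite /subst /= !cats0; apply; lia.
case/mapP=> [[i j]]; rewrite mem_filter => /andP[/= Hfar].
case/allpairsP=> [[i' j'] [/= Hi Hj [Ei Ej]]] [-> ->]; subst i' j'.
move: Hi Hj; rewrite !mem_iota => Hi Hj; rewrite /subst /= !cats0.
case/orP: Hfar => Hfar.
  by have := @psi_comm i j [::]; rewrite !cats0 => H; symmetry; apply: H; lia.
by have := @psi_comm j i [::]; rewrite !cats0; apply; lia.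
Qed.

(* psi(phi(rho_k)) = psi_1 ... psi_k = rho_k. *)
Lemma psi_phi_gen k t : (0 < k)%N -> subst psi (phi k) ++ t ≡ gen k :: t.
Proof. by case: k => // k _; rewrite /phi subst_gen psi_telescope. Qed.

End Hgroup.

Lemma subst_phi_pos p : all (fun x : letter => ~~ x.2) p ->
  subst phi p = flatten [seq phi i | i <- map fst p].
Proof.
elim: p => //= [[k b] p IHp] /andP[/= Hb Hp].
by rewrite subst_cons /= (negbTE Hb) IHp.
Qed.

Lemma image_H_Sigma n w : in_image_H n w <-> in_Sigma n w.
Proof.
split=> [[p [/andP[Hp Hpos] Hw]] | [s [Hs Hw]]].
  exists (map fst p); split; last by rewrite -subst_phi_pos.
  by rewrite all_map; apply: sub_all Hp.
exists (map gen s); split; last by rewrite subst_gen.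
by rewrite /pos_word_on /word_on !all_map; apply/andP; split => //; apply/allP.
Qed.

Theorem proposition5p2 (n : nat) : (1 <= n)%N ->
  [/\ (forall u v, word_on n u -> word_on n v ->
         pres_eq (H_rels n) u v -> pres_eq (braid_rels n) (subst phi u) (subst phi v)),
      (forall u v, word_on n u -> word_on n v ->
         pres_eq (braid_rels n) u v -> pres_eq (H_rels n) (subst psi u) (subst psi v)),
      (forall u, word_on n u -> pres_eq (H_rels n) (subst psi (subst phi u)) u),
      (forall w, word_on n w -> pres_eq (braid_rels n) (subst phi (subst psi w)) w)
    & (forall w, word_on n w -> (in_image_H n w <-> in_Sigma n w))].
Proof.
move=> _; split=> [u v _ _ | u v _ _ | u Hu | w Hw | w _].
- exact/subst_pres/phi_H_rels.
- exact/subst_pres/psi_braid_rels.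
- rewrite subst_subst; apply: (subst_id (n := n)) => // k /andP[Hk _] t.
  exact: psi_phi_gen.
- rewrite subst_subst; apply: (subst_id (n := n)) => // k /andP[Hk _] t.
  exact: phi_psi_gen.
- exact: image_H_Sigma.
Qed.
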